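(* Let $k$ be an integer with $0\leq k\leq n-1$ such that $\gcd(k,n)$ is a power of $2$ (possibly $1$). Then there exists $N\geq 0$ such that $c_k^N\in(e_0)$, the two-sided ideal of $A\#C_n$ generated by $e_0$.
   Context: $\Bbbk$ is an algebraically closed field of characteristic zero, $n\ge 2$, $A=\Bbbk_{-1}[x_0,\dots,x_{n-1}]$ is generated by degree-one $x_0,\dots,x_{n-1}$ with $x_ix_j=-x_jx_i$ ($i\ne j$), $C_n=\langle\sigma\rangle$ acts by $\sigma(x_i)=x_{i+1}$ (indices in $\mathbb{Z}_n$), and $A\#C_n$ is the skew group algebra. Let $\omega$ be a primitive $n$th root of unity, $b_\gamma=\frac1n\sum_{i=0}^{n-1}\omega^{i\gamma}x_i$, $e_\alpha=\frac1n\sum_{i=0}^{n-1}(\omega^\alpha\sigma)^i$, and $c_j=b_kb_{j-k}+b_{j-k}b_k$ (independent of $k$) for $\alpha,\gamma,j\in\mathbb{Z}_n$. In particular $e_0=\frac1n\sum_{g\in C_n}g$. Here $\gcd(0,n)=n$. *)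

From HB Require Import structures.
From mathcomp Require Import all_boot all_order all_algebra.
Set Implicit Arguments. Unset Strict Implicit. Unset Printing Implicit Defensive.
Import Order.TTheory GRing.Theory Num.Theory.
Local Open Scope ring_scope.

(* Model of the skew group algebra  A # C_n,  A = k_{-1}[x_0,...,x_{n-1}].
   An element is a finite formal sum of terms  c * w * sigma^g  where
   w is a word in the letters x_i (i : 'Z_n) and g : 'Z_n.
   Such a formal sum denotes an element of A # C_n via [coef]: the word w
   equals (-1)^(inv w) x^(monom w) in A (x_i x_j = - x_j x_i for i <> j),
   and {x^m sigma^g} is a k-basis of A # C_n.  Two formal sums denote the
   same element iff their [coef] functions agree ([equiv]). *)
Section SkewGroupAlgebra.
Variables (F : fieldType) (n : nat).

Definition term := (F * seq 'Z_n * 'Z_n)%type.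
Definition elt := seq term.

Definition eadd (s t : elt) : elt := s ++ t.

(* (w sigma^s)(w' sigma^t) = w sigma^s(w') sigma^(s+t), sigma(x_i) = x_(i+1) *)
Definition emul (s t : elt) : elt :=
  [seq (a.1.1 * b.1.1, a.1.2 ++ map (fun i => i + a.2) b.1.2, a.2 + b.2)
  | a <- s, b <- t].

Definition eone : elt := [:: (1, [::], 0)].

Definition epow (s : elt) (N : nat) : elt := iter N (emul s) eone.

Fixpoint inv_word (w : seq 'Z_n) : nat :=
  if w is x :: w' then (count (fun y : 'Z_n => (val y < val x)%N) w' + inv_word w')%N
  else 0%N.

Definition monom (w : seq 'Z_n) : {ffun 'Z_n -> nat} := [ffun i => count_mem i w].

Definition coef (s : elt) (m : {ffun 'Z_n -> nat}) (g : 'Z_n) : F :=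
  \sum_(t <- s | (monom t.1.2 == m) && (t.2 == g)) t.1.1 * (-1) ^+ inv_word t.1.2.

Definition equiv (s t : elt) : Prop := forall m g, coef s m g = coef t m g.

Variable w : F. (* primitive n-th root of unity *)

Definition bb (gamma : 'Z_n) : elt :=
  [seq ((n%:R)^-1 * w ^+ (val i * val gamma), [:: i], 0) | i <- enum 'Z_n].

(* e_alpha = 1/n sum_i (w^alpha sigma)^i *)
Definition ee (alpha : 'Z_n) : elt :=
  [seq ((n%:R)^-1 * w ^+ (val alpha * val i), [::], i) | i <- enum 'Z_n].

(* c_j = b_k b_(j-k) + b_(j-k) b_k, taken with k = 0 *)
Definition cc (j : 'Z_n) : elt := eadd (emul (bb 0) (bb j)) (emul (bb j) (bb 0)).

Definition in_ideal_e0 (s : elt) : Prop :=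
  exists l : seq (elt * elt),
    equiv s (flatten [seq emul (emul p.1 (ee 0)) p.2 | p <- l]).

End SkewGroupAlgebra.

From Pilot Require Import Defs.
From HB Require Import structures.
From mathcomp Require Import all_boot all_order all_algebra.
From mathcomp Require Import zify ring.
From Stdlib Require Import Setoid Morphisms.
Import GRing.Theory.
Local Open Scope ring_scope.
Set Implicit Arguments. Unset Strict Implicit. Unset Printing Implicit Defensive.

(* Iterating e times
      reaches a multiple of k because 2^e = gcd(k, n) is a multiple of k in Z/n,
      so every c^(n+e) e_a, hence c^(n+e) = sum_a c^(n+e) e_a, lies in (e_0). *)
Section Words.
Variable n : nat.
Local Notation Z := 'Z_n.

Definition lt_of (x : Z) : pred Z := fun y => (val y < val x)%N.
Definition gt_of (x : Z) : pred Z := fun y => (val x < val y)%N.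

Definition cross (u v : seq Z) : nat := \sum_(x <- u) count (lt_of x) v.

Lemma inv_word_cat (u v : seq Z) :
  inv_word (u ++ v) = (inv_word u + inv_word v + cross u v)%N.
Proof.
elim: u => [|x u IH] /=; first by rewrite /cross big_nil addn0.
rewrite IH /cross big_cons count_cat -/(lt_of x); lia.
Qed.

Lemma cross_perml (u u' v : seq Z) : perm_eq u u' -> cross u v = cross u' v.
Proof. by move=> pu; rewrite /cross (perm_big _ pu). Qed.

Lemma cross_permr (u v v' : seq Z) : perm_eq v v' -> cross u v = cross u v'.
Proof. by move=> /permP pv; rewrite /cross; apply: eq_bigr => x _; rewrite pv. Qed.

Lemma inv_word_mid (u v : seq Z) (x : Z) : inv_word (u ++ x :: v) =
  (inv_word (u ++ v) + count (gt_of x) u + count (lt_of x) v)%N.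
Proof.
elim: u => [|y u IH] /=; first by rewrite addn0 addnC.
rewrite IH !count_cat /= /gt_of /lt_of.
case: ltnP => /= _; lia.
Qed.

Lemma count_lt_gt (x : Z) (u : seq Z) :
  (count (lt_of x) u + count (gt_of x) u)%N = count (predC1 x) u.
Proof.
rewrite -count_predUI (@eq_count _ (predI _ _) pred0) ?count_pred0 ?addn0; last first.
  by move=> y /=; rewrite /lt_of /gt_of; apply/negP => /andP[]; lia.
apply: eq_count => y /=; rewrite /lt_of /gt_of -neq_ltn.
by rewrite (inj_eq val_inj).
Qed.

(* The parity bookkeeping of [inv_word_map_perm]. *)
Lemma xor_shuffle (a b c d e g h1 h2 h3 h4 : bool) :
  a (+) b = c (+) d -> h1 (+) h2 = h3 (+) h4 ->
  a (+) e (+) h1 (+) (c (+) g (+) h2) = h3 (+) b (+) e (+) (h4 (+) d (+) g).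
Proof.
by case: a; case: b; case: c; case: d; case: e; case: g; case: h1; case: h2;
  case: h3; case: h4.
Qed.

Lemma inv_word_map_perm (f : Z -> Z) (u u' : seq Z) : injective f -> perm_eq u u' ->
  odd (inv_word (map f u) + inv_word u) = odd (inv_word (map f u') + inv_word u').
Proof.
move=> f_inj; elim: u u' => [|x u IH] u' pu.
  by case: u' pu => // y s /perm_size.
have [p1 [p2 def_u']] : exists p1 p2, u' = p1 ++ x :: p2.
  have /splitPr[p1 p2] : x \in u' by rewrite -(perm_mem pu) mem_head.
  by exists p1, p2.
rewrite {u'}def_u' in pu *.
have pu12 : perm_eq u (p1 ++ p2).
  rewrite -(perm_cons x) (permPl pu); apply/permPl; exact: (perm_catCA p1 [:: x] p2).
have {}IH := IH _ pu12; rewrite map_cat in IH.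
have sep_x : count (lt_of x) u = (count (lt_of x) p1 + count (lt_of x) p2)%N.
  by rewrite -count_cat; apply/permP.
have sep_fx : count (lt_of (f x)) (map f u) =
    (count (lt_of (f x)) (map f p1) + count (lt_of (f x)) (map f p2))%N.
  by rewrite -count_cat -map_cat; apply/permP; apply: perm_map.
have split_p1 : (count (lt_of (f x)) (map f p1) + count (gt_of (f x)) (map f p1) =
    count (lt_of x) p1 + count (gt_of x) p1)%N.
  rewrite !count_lt_gt count_map; apply: eq_count => y /=.
  by rewrite (inj_eq f_inj).
rewrite map_cat /= !inv_word_mid sep_x sep_fx !oddD.
by apply: xor_shuffle; rewrite -!oddD ?split_p1.
Qed.

Lemma monom_perm (u v : seq Z) : (monom u == monom v) = perm_eq u v.
Proof.
apply/eqP/idP => [muv|puv].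
  by apply/allP => x _ /=; apply/eqP; move/ffunP: muv => /(_ x); rewrite !ffunE.
by apply/ffunP => x; rewrite !ffunE; apply/permP.
Qed.

Definition rep (m : {ffun Z -> nat}) : seq Z := flatten [seq nseq (m i) i | i <- enum Z].

Lemma monom_rep (m : {ffun Z -> nat}) : monom (rep m) = m.
Proof.
apply/ffunP => x; rewrite ffunE /rep count_flatten -map_comp.
rewrite (@eq_map _ _ _ (fun i => ((i == x) * m i)%N)); last first.
  by move=> i /=; rewrite count_nseq /= eq_sym mulnC.
rewrite sumnE big_map big_enum /= (bigD1 x) //= eqxx mul1n big1 ?addn0 //.
by move=> i /negPf ->.
Qed.

Lemma perm_rep (u : seq Z) : perm_eq u (rep (monom u)).
Proof. by rewrite -monom_perm monom_rep. Qed.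

End Words.

Section FormalSums.
Variables (F : fieldType) (n : nat).
Local Notation Z := 'Z_n.
Local Notation elt := (elt F n).
Local Notation term := (term F n).
Local Notation equiv := (@Defs.equiv F n).

(* The sign with which a word equals its sorted monomial in A. *)
Definition sg (u : seq Z) : F := (-1) ^+ inv_word u.

Lemma sg_cat (u v : seq Z) : sg (u ++ v) = sg u * sg v * (-1) ^+ cross u v.
Proof. by rewrite /sg inv_word_cat !exprD. Qed.

Lemma sgK (u : seq Z) : sg u * sg u = 1.
Proof. by rewrite /sg -exprD -signr_odd oddD addbb. Qed.

Lemma sg_map_perm (f : Z -> Z) (u u' : seq Z) : injective f -> perm_eq u u' ->
  sg (map f u) * sg u = sg (map f u') * sg u'.
Proof.
move=> f_inj pu; rewrite /sg -!exprD -[LHS]signr_odd -[RHS]signr_odd.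
by rewrite (inv_word_map_perm f_inj pu).
Qed.

Definition tval (t : term) : F := t.1.1 * sg t.1.2.

Lemma coefE (s : elt) m g : coef s m g =
  \sum_(t <- s) (if (monom t.1.2 == m) && (t.2 == g) then tval t else 0).
Proof. by rewrite /coef big_mkcond. Qed.

Lemma coef_cat (s t : elt) m g : coef (s ++ t) m g = coef s m g + coef t m g.
Proof. by rewrite /coef big_cat. Qed.

Lemma coef_flatten (L : seq elt) m g : coef (flatten L) m g = \sum_(s <- L) coef s m g.
Proof. by rewrite /coef big_flatten. Qed.

Definition tmul (a b : term) : term :=
  (a.1.1 * b.1.1, a.1.2 ++ map (fun i => i + a.2) b.1.2, a.2 + b.2).

Lemma emulE (s t : elt) : emul s t = [seq tmul a b | a <- s, b <- t].
Proof. by []. Qed.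

Definition tcoef m g (t : term) : F :=
  if (monom t.1.2 == m) && (t.2 == g) then tval t else 0.

Lemma coef_emul (s t : elt) m g :
  coef (emul s t) m g = \sum_(a <- s) \sum_(b <- t) tcoef m g (tmul a b).
Proof. by rewrite coefE emulE big_allpairs_dep. Qed.

Lemma sum_by_coef (s : elt) (h : {ffun Z -> nat} -> Z -> F)
    (ks : seq ({ffun Z -> nat} * Z)) :
  uniq ks -> (forall t, t \in s -> (monom t.1.2, t.2) \in ks) ->
  \sum_(t <- s) tval t * h (monom t.1.2) t.2 = \sum_(k <- ks) coef s k.1 k.2 * h k.1 k.2.
Proof.
move=> uks sub.
under [RHS]eq_bigr => k _ do rewrite coefE big_distrl.
rewrite /= exchange_big /=; apply: eq_big_seq => t ts.
transitivity (\sum_(k <- ks | k == (monom t.1.2, t.2)) tval t * h (monom t.1.2) t.2).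
  by rewrite big_const_seq count_uniq_mem // sub //= addr0.
rewrite big_mkcond; apply: eq_bigr => -[k1 k2] _ /=.
rewrite xpair_eqE [monom _ == k1]eq_sym [t.2 == k2]eq_sym.
by case: eqP => [->|_]; case: eqP => [->|_] /=; rewrite ?mul0r.
Qed.

Lemma equiv_sum (s s' : elt) (h : {ffun Z -> nat} -> Z -> F) : equiv s s' ->
  \sum_(t <- s) tval t * h (monom t.1.2) t.2 = \sum_(t <- s') tval t * h (monom t.1.2) t.2.
Proof.
move=> ss'; pose key (t : term) := (monom t.1.2, t.2).
pose ks := undup (map key s ++ map key s').
have uks : uniq ks by rewrite undup_uniq.
rewrite (sum_by_coef h uks) => [|t ts]; last by rewrite mem_undup mem_cat map_f.
rewrite (sum_by_coef h uks) => [|t ts]; last by rewrite mem_undup mem_cat (map_f key ts) orbT.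
by apply: eq_bigr => k _; rewrite ss'.
Qed.

Lemma equiv_refl (s : elt) : equiv s s. Proof. by []. Qed.
Lemma equiv_sym (s t : elt) : equiv s t -> equiv t s. Proof. by move=> st m g; rewrite st. Qed.
Lemma equiv_trans (s t u : elt) : equiv s t -> equiv t u -> equiv s u.
Proof. by move=> st tu m g; rewrite st tu. Qed.

Lemma equiv_cat (s s' t t' : elt) : equiv s s' -> equiv t t' -> equiv (s ++ t) (s' ++ t').
Proof. by move=> ss' tt' m g; rewrite !coef_cat ss' tt'. Qed.

(* Each word is compared with the sorted representative
   of its monomial, the signs being controlled by [sg_map_perm] and [cross_perm*]. *)
Lemma emul_equivr (s t t' : elt) : equiv t t' -> equiv (emul s t) (emul s t').
Proof.
move=> tt' m g; rewrite !coef_emul; apply: eq_bigr => a _.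
pose f i := i + a.2.
have f_inj : injective f by move=> x y; apply: addIr.
pose h (m2 : {ffun Z -> nat}) (g2 : Z) :=
  if (monom (a.1.2 ++ map f (rep m2)) == m) && (a.2 + g2 == g)
  then a.1.1 * sg (a.1.2 ++ map f (rep m2)) * sg (rep m2) else 0.
suff weight u : \sum_(b <- u) tcoef m g (tmul a b) = \sum_(b <- u) tval b * h (monom b.1.2) b.2.
  by rewrite !weight; apply: equiv_sum.
apply: eq_bigr => b _; rewrite /h /tcoef /tmul /tval /=.
have pb := perm_rep b.1.2.
have -> : monom (a.1.2 ++ map f b.1.2) = monom (a.1.2 ++ map f (rep (monom b.1.2))).
  by apply/eqP; rewrite monom_perm perm_cat2l perm_map.
case: ifP => _; last by rewrite mulr0.
rewrite !sg_cat (cross_permr _ (perm_map f pb)).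
have -> : sg (map f b.1.2) = sg (map f (rep (monom b.1.2))) * sg (rep (monom b.1.2)) * sg b.1.2.
  by rewrite -(sg_map_perm f_inj pb) -mulrA sgK mulr1.
ring.
Qed.

Lemma emul_equivl (s s' t : elt) : equiv s s' -> equiv (emul s t) (emul s' t).
Proof.
move=> ss' m g; rewrite !coef_emul.
pose h (m1 : {ffun Z -> nat}) (g1 : Z) :=
  \sum_(b <- t) (if (monom (rep m1 ++ map (fun i => i + g1) b.1.2) == m) && (g1 + b.2 == g)
  then b.1.1 * sg (rep m1 ++ map (fun i => i + g1) b.1.2) * sg (rep m1) else 0).
suff weight u : \sum_(a <- u) \sum_(b <- t) tcoef m g (tmul a b) =
    \sum_(a <- u) tval a * h (monom a.1.2) a.2.
  by rewrite !weight; apply: equiv_sum.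
apply: eq_bigr => a _; rewrite /h mulr_sumr; apply: eq_bigr => b _.
rewrite /tcoef /tmul /tval /=.
have pa := perm_rep a.1.2; set r := rep (monom a.1.2) in pa *.
have -> : monom (a.1.2 ++ [seq i + a.2 | i <- b.1.2]) = monom (r ++ [seq i + a.2 | i <- b.1.2]).
  by apply/eqP; rewrite monom_perm perm_cat2r.
case: ifP => _; last by rewrite mulr0.
rewrite !sg_cat (cross_perml _ pa).
transitivity (a.1.1 * b.1.1 * sg a.1.2 * sg [seq i + a.2 | i <- b.1.2] *
    (-1) ^+ cross r [seq i + a.2 | i <- b.1.2] * (sg r * sg r)); last by ring.
by rewrite sgK mulr1; ring.
Qed.

End FormalSums.

#[local] Instance equiv_Equivalence (F : fieldType) (n : nat) : Equivalence (@Defs.equiv F n).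
Proof. by split => [s|s t|s t u]; [exact: equiv_refl|exact: equiv_sym|exact: equiv_trans]. Qed.

#[local] Instance emul_Proper (F : fieldType) (n : nat) :
  Proper (@Defs.equiv F n ==> @Defs.equiv F n ==> @Defs.equiv F n) (@emul F n).
Proof.
by move=> s s' ss' t t' tt'; apply: equiv_trans (emul_equivl _ ss') (emul_equivr _ tt').
Qed.

#[local] Instance cat_Proper (F : fieldType) (n : nat) :
  Proper (@Defs.equiv F n ==> @Defs.equiv F n ==> @Defs.equiv F n) (@cat (term F n)).
Proof. by move=> s s' ss' t t' tt'; apply: equiv_cat. Qed.

#[local] Instance in_ideal_e0_Proper (F : fieldType) (n : nat) (w : F) :
  Proper (@Defs.equiv F n ==> iff) (in_ideal_e0 w).
Proof. by move=> s s' ss'; split => -[l sl]; exists l; rewrite -sl ss'. Qed.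

Section AlgebraLaws.
Variables (F : fieldType) (n : nat).
Local Notation elt := (elt F n).
Local Notation term := (term F n).
Local Notation equiv := (@Defs.equiv F n).

Lemma emul_catl (s s' t : elt) : emul (s ++ s') t = emul s t ++ emul s' t.
Proof. by rewrite !emulE allpairs_cat. Qed.

Lemma emul_catr (s t t' : elt) : equiv (emul s (t ++ t')) (emul s t ++ emul s t').
Proof.
move=> m g; rewrite coef_cat !coef_emul -big_split /=.
by apply: eq_bigr => a _; rewrite big_cat.
Qed.

Lemma emul0r (s : elt) : emul s [::] = [::]. Proof. by rewrite emulE allpairs0r. Qed.

Lemma tmulA (a b c : term) : tmul (tmul a b) c = tmul a (tmul b c).
Proof.
rewrite /tmul /= map_cat -map_comp -catA mulrA addrA; congr (_, _, _).
congr (_ ++ (_ ++ _)); apply: eq_map => i /=; by rewrite -addrA [a.2 + _]addrC.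
Qed.

Lemma emul_map_tmul (a : term) (t u : elt) :
  emul [seq tmul a b | b <- t] u = [seq tmul a x | x <- emul t u].
Proof.
elim: t => [|b t IHt] //=.
rewrite [emul (_ :: _) u]emulE allpairs_cons -emulE IHt.
rewrite [emul (b :: t) u]emulE allpairs_cons -emulE map_cat -map_comp; congr (_ ++ _).
by apply: eq_map => c /=; rewrite tmulA.
Qed.

Lemma emulA (s t u : elt) : emul (emul s t) u = emul s (emul t u).
Proof.
elim: s => [|a s IH] //.
rewrite [emul (a :: s) t]emulE allpairs_cons -emulE emul_catl IH emul_map_tmul.
by rewrite [emul (a :: s) _]emulE allpairs_cons -!emulE.
Qed.

Lemma emul1l (s : elt) : emul (eone F n) s = s.
Proof.
rewrite emulE /eone /= cats0 -[RHS]map_id; apply: eq_map => -[[c u] g] /=.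
rewrite /tmul /= mul1r add0r; congr (_, _, _).
by rewrite -[RHS]map_id; apply: eq_map => i; rewrite addr0.
Qed.

Lemma emul1r (s : elt) : emul s (eone F n) = s.
Proof.
rewrite emulE /eone allpairs1r -[RHS]map_id; apply: eq_map => -[[c u] g] /=.
by rewrite /tmul /= mulr1 addr0 cats0.
Qed.

Lemma emul_flattenr (s : elt) (L : seq elt) :
  equiv (emul s (flatten L)) (flatten (map (emul s) L)).
Proof. by elim: L => [|t L IH] /=; rewrite ?emul0r // emul_catr IH. Qed.

Lemma emul_flattenl (t : elt) (L : seq elt) :
  emul (flatten L) t = flatten (map (fun s => emul s t) L).
Proof. by elim: L => [|s L IH] //=; rewrite emul_catl IH. Qed.

Lemma epowS (s : elt) (m : nat) : epow s m.+1 = emul s (epow s m).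
Proof. by []. Qed.

Variable w : F.
Local Notation in_ideal := (@in_ideal_e0 F n w).

Lemma ideal_cat (s t : elt) : in_ideal s -> in_ideal t -> in_ideal (s ++ t).
Proof.
by move=> [l1 sl1] [l2 tl2]; exists (l1 ++ l2); rewrite map_cat flatten_cat sl1 tl2.
Qed.

Lemma ideal_flatten (L : seq elt) : (forall s, s \in L -> in_ideal s) -> in_ideal (flatten L).
Proof.
elim: L => [|s L IH] L_ideal /=; first by exists [::].
apply: ideal_cat; first by apply: L_ideal; rewrite mem_head.
by apply: IH => t tL; apply: L_ideal; rewrite in_cons tL orbT.
Qed.

Lemma ideal_mull (p s : elt) : in_ideal s -> in_ideal (emul p s).
Proof.
move=> [l sl]; exists [seq (emul p q.1, q.2) | q <- l].
rewrite sl emul_flattenr -!map_comp; apply: eq_subrelation; congr flatten.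
by apply: eq_map => q /=; rewrite -!emulA.
Qed.

Lemma ideal_mulr (p s : elt) : in_ideal s -> in_ideal (emul s p).
Proof.
move=> [l sl]; exists [seq (q.1, emul q.2 p) | q <- l].
rewrite sl emul_flattenl -!map_comp; apply: eq_subrelation; congr flatten.
by apply: eq_map => q /=; rewrite !emulA.
Qed.

Lemma ideal_gen (p q : elt) : in_ideal (emul (emul p (ee w 0)) q).
Proof. by exists [:: (p, q)]; rewrite /= cats0. Qed.

End AlgebraLaws.

Section RootOfUnity.
Variables (F : fieldType) (n' : nat) (w : F).
Hypothesis hw : (n'.+2).-primitive_root w.
Local Notation n := n'.+2.
Local Notation Z := 'Z_n.
Local Notation elt := (elt F n).
Local Notation term := (term F n).
Local Notation equiv := (@Defs.equiv F n).
Local Notation b := (bb w).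
Local Notation e := (ee w).

Definition wz (x : Z) : F := w ^+ val x.

Lemma wz_mul (x y : Z) : w ^+ (val x * val y) = wz (x * y).
Proof. by rewrite /wz -(prim_expr_mod hw). Qed.

Lemma wzD (x y : Z) : wz (x + y) = wz x * wz y.
Proof. by rewrite /wz -exprD -(prim_expr_mod hw (val x + val y)). Qed.

Lemma sum_enum (G : Z -> F) : \sum_(i <- enum Z) G i = \sum_(i : Z) G i.
Proof. by rewrite big_enum. Qed.

Lemma coef_map (f : Z -> term) m g :
  coef (map f (enum Z)) m g = \sum_(i : Z) tcoef m g (f i).
Proof. by rewrite coefE big_map sum_enum. Qed.

Lemma coef_emul_map (f1 f2 : Z -> term) m g :
  coef (emul (map f1 (enum Z)) (map f2 (enum Z))) m g =
  \sum_(i : Z) \sum_(l : Z) tcoef m g (tmul (f1 i) (f2 l)).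
Proof.
rewrite coef_emul big_map sum_enum; apply: eq_bigr => i _.
by rewrite big_map sum_enum.
Qed.

(* Commutation rule  e_a b_g = b_g e_(a-g),  from  sigma(b_g) = w^(-g) b_g. *)
Lemma e_b_comm (a g : Z) : equiv (emul (e a) (b g)) (emul (b g) (e (a - g))).
Proof.
move=> m h; rewrite /ee /bb !coef_emul_map [RHS]exchange_big; apply: eq_bigr => i _.
rewrite [RHS](reindex_inj (addIr i)); apply: eq_bigr => l _.
rewrite /tcoef /tmul !wz_mul /= addr0 add0r.
case: ifP => _ //; rewrite /tval /=; congr (_ * _).
rewrite [LHS]mulrACA [RHS]mulrACA -!wzD; congr (_ * wz _); ring.
Qed.

Definition csq (j : Z) : elt :=
  [seq (2%:R * (n%:R^-1 * n%:R^-1 * wz (i * j)), [:: i; i], 0) | i <- enum Z].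

(* b_a b_(j-a) + b_(j-a) b_a = csq j for every a: the mixed terms x_i x_l + x_l x_i
   cancel by anticommutativity.  In particular c_j does not depend on k. *)
Lemma anticomm_bb (a j : Z) :
  equiv (eadd (emul (b a) (b (j - a))) (emul (b (j - a)) (b a))) (csq j).
Proof.
move=> m h; rewrite /eadd coef_cat /bb !coef_emul_map /csq coef_map.
rewrite [X in _ + X = _]exchange_big -big_split; apply: eq_bigr => i _.
rewrite -big_split (bigD1 i) // big1 ?addr0 => [|l neq_li].
  rewrite /tcoef /tmul !wz_mul /= !addr0.
  case: ifP => _; last by rewrite addr0.
  rewrite /tval /sg /= !ltnn /= expr0 (_ : i * j = i * a + i * (j - a)) ?wzD; ring.
rewrite /tcoef /tmul !wz_mul /= !addr0.
have -> : monom [:: l; i] = monom [:: i; l].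
  by apply/eqP; rewrite monom_perm (perm_catC [:: l] [:: i]).
case: ifP => _; last by rewrite addr0.
rewrite /tval /sg /= !addn0.
have neq_val : val l != val i by [].
by case: ltngtP neq_val => //= _ _; rewrite expr1 expr0; ring.
Qed.

Lemma sg_sq_left (x y : Z) : sg F [:: x; x; y] = 1.
Proof. by rewrite /sg /= ltnn /= -signr_odd; case: (_ < _)%N. Qed.

Lemma sg_sq_right (x y : Z) : sg F [:: y; x; x] = 1.
Proof. by rewrite /sg /= ltnn /= -signr_odd; case: (_ < _)%N. Qed.

(* Squares x_i^2 commute with every x_l, hence csq j commutes with every b_g. *)
Lemma csq_b_comm (j g : Z) : equiv (emul (csq j) (b g)) (emul (b g) (csq j)).
Proof.
move=> m h; rewrite /csq /bb !coef_emul_map [RHS]exchange_big; apply: eq_bigr => i _.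
apply: eq_bigr => l _; rewrite /tcoef /tmul /= !addr0.
have -> : monom [:: l; i; i] = monom [:: i; i; l].
  by apply/eqP; rewrite monom_perm (perm_catC [:: l] [:: i; i]).
by case: ifP => _ //; rewrite /tval /= sg_sq_left sg_sq_right !mulr1 mulrC.
Qed.

Lemma sum_wz (i : Z) : \sum_(a : Z) wz (a * i) = if i == 0 then n%:R else 0.
Proof.
under eq_bigr => a _ do rewrite -wz_mul mulnC exprM.
have [->|i_neq0] := eqVneq i 0.
  by under eq_bigr => a _ do rewrite /= expr0 expr1n; rewrite sumr_const card_ord.
set z := w ^+ val i.
have z_n : z ^+ n = 1 by rewrite /z -exprM mulnC exprM (prim_expr_order hw) expr1n.
have z_neq1 : z - 1 != 0.
  rewrite subr_eq0 /z -[X in _ != X](expr0 w) (eq_prim_root_expr hw) mod0n.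
  by rewrite modn_small ?ltn_ord.
have /eqP := subrX1 z n; rewrite z_n subrr eq_sym mulf_eq0 (negPf z_neq1) /=.
by move/eqP.
Qed.

Lemma one_sum_e : equiv (eone F n) (flatten [seq e a | a <- enum Z]).
Proof.
move=> m h; rewrite coef_flatten big_map sum_enum.
under eq_bigr => a _ do rewrite /ee coef_map.
rewrite exchange_big /=.
have sum_i i : \sum_(a : Z) tcoef m h (n%:R^-1 * w ^+ (val a * val i), [::], i) =
    if (monom [::] == m) && (i == h) then n%:R^-1 * (if i == 0 then n%:R else 0) else 0.
  rewrite /tcoef; case: ifP => _; last by rewrite big1.
  rewrite -sum_wz mulr_sumr; apply: eq_bigr => a _.
  by rewrite /tval wz_mul /sg /= mulr1.
under eq_bigr => i _ do rewrite sum_i.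
rewrite (bigD1 0) //= big1 ?addr0 => [|i /negPf ->]; last by case: ifP; rewrite ?mulr0.
rewrite mulVf ?(prim_root_natf_neq0 hw) //.
by rewrite coefE big_cons big_nil addr0 /tval /sg /= mulr1 [0 == h]eq_sym.
Qed.

End RootOfUnity.

Section PowersOfC.
Variables (F : fieldType) (n' : nat) (w : F).
Hypothesis hw : (n'.+2).-primitive_root w.
Local Notation n := n'.+2.
Local Notation Z := 'Z_n.
Local Notation equiv := (@Defs.equiv F n).
Local Notation in_ideal := (@in_ideal_e0 F n w).
Local Notation b := (bb w).
Local Notation e := (ee w).
Variable k : Z.
Local Notation c := (cc w k).

Lemma c_csq : equiv c (csq w k).
Proof. by rewrite -(anticomm_bb hw 0 k) subr0. Qed.

Lemma c_split (g : Z) : equiv c (emul (b (k - g)) (b g) ++ emul (b g) (b (k - g))).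
Proof.
by rewrite c_csq -(anticomm_bb hw (k - g) k) (_ : k - (k - g) = g) //; ring.
Qed.

Lemma c_b_comm (g : Z) : equiv (emul c (b g)) (emul (b g) c).
Proof. by rewrite c_csq; apply: csq_b_comm. Qed.

Lemma cpow_b_comm (m : nat) (g : Z) : equiv (emul (epow c m) (b g)) (emul (b g) (epow c m)).
Proof.
elim: m => [|m IH]; first by rewrite /= emul1l emul1r.
by rewrite epowS emulA IH -emulA c_b_comm emulA.
Qed.

Lemma e_c_comm (a : Z) : equiv (emul (e a) c) (emul c (e (a - k))).
Proof.
rewrite /cc /eadd emul_catr emul_catl -!emulA e_b_comm // subr0.
rewrite [emul (emul (b 0) (e a)) _]emulA e_b_comm //.
by rewrite [emul (emul (b k) (e _)) _]emulA e_b_comm // subr0 !emulA.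
Qed.

Lemma e_cpow_comm (m : nat) (a : Z) :
  equiv (emul (e a) (epow c m)) (emul (epow c m) (e (a - k *+ m))).
Proof.
elim: m a => [|m IH] a; first by rewrite /= emul1l emul1r mulr0n subr0.
rewrite epowS -emulA e_c_comm emulA IH -emulA.
by rewrite (_ : a - k - k *+ m = a - k *+ m.+1) // mulrS opprD addrA.
Qed.

Definition good (m : nat) (g : Z) : Prop := in_ideal (emul (epow c m) (e (- g))).

Lemma good_mono (m m' : nat) (g : Z) : (m <= m')%N -> good m g -> good m' g.
Proof.
move=> /subnK <-; elim: (m' - m)%N => [|d IH] //= good_g.
by rewrite /good epowS emulA; apply/ideal_mull/IH.
Qed.

Lemma good_base (j : nat) : good j (k *+ j).
Proof. by rewrite /good -sub0r -e_cpow_comm -(emul1l (e 0)); apply: ideal_gen. Qed.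

(* Writing c = b_(k-g) b_g + b_g b_(k-g) and moving e_(-g) to the left:
   b_g e_(-g) = e_0 b_g, and b_(k-g) e_(-g) = e_(k-2g) b_(k-g). *)
Lemma good_step (m : nat) (g : Z) : good m (g + g - k) -> good m.+1 g.
Proof.
rewrite /good epowS => good_m.
have P_b g' : equiv (emul (epow c m) (b g')) (emul (b g') (epow c m)) := cpow_b_comm m g'.
set P := epow c m in good_m P_b *.
rewrite (c_split g) !emul_catl; apply: ideal_cat.
  have b_e : equiv (emul (b g) (e (- g))) (emul (e 0) (b g)).
    by rewrite e_b_comm // sub0r.
  rewrite !emulA -[emul (b g) (emul P _)]emulA -P_b emulA b_e.
  by apply: ideal_mull; rewrite -emulA; apply: ideal_gen.
have b_e : equiv (emul (b (k - g)) (e (- g))) (emul (e (- (g + g - k))) (b (k - g))).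
  by rewrite e_b_comm // (_ : - (g + g - k) - (k - g) = - g) //; ring.
rewrite !emulA -[emul (b (k - g)) (emul P _)]emulA -P_b emulA b_e.
by apply: ideal_mull; rewrite -emulA; apply: ideal_mulr.
Qed.

(* If (g - k) 2^t is a multiple of k, then c^m e_(-g) is in (e_0) for m >= n + t:
   halve t times with [good_step] until reaching a multiple of k. *)
Lemma good_iter (t : nat) (g : Z) : (exists x, (g - k) *+ 2 ^ t = k * x) ->
  forall m, (n + t <= m)%N -> good m g.
Proof.
elim: t g => [|t IH] g [x gx] m le_m.
  rewrite expn0 mulr1n in gx.
  have -> : g = k *+ val (x + 1) by rewrite -mulr_natr natr_Zp -[g](subrK k) gx; ring.
  by apply: good_mono (good_base _); rewrite (leq_trans (ltnW (ltn_ord _))) // -(addn0 n).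
case: m le_m => [|m] le_m; first by rewrite addnS in le_m.
apply: good_step; apply: (IH _ _ m); last by rewrite -ltnS -addnS.
by exists x; rewrite -gx expnS mulnC mulrnA (_ : g + g - k - k = (g - k) *+ 2) //; ring.
Qed.

(* If 2^t is a multiple of k in Z/n then c^(n+t) = sum_a c^(n+t) e_a lies in (e_0). *)
Lemma cpow_in_ideal (t : nat) : (exists x : Z, (2 ^ t)%:R = k * x) -> in_ideal (epow c (n + t)).
Proof.
move=> [x pow2_x]; rewrite -(emul1r (epow c _)) (one_sum_e hw) emul_flattenr.
apply: ideal_flatten => _ /mapP [_ /mapP [a _ ->] ->].
rewrite -(opprK a); apply: (good_iter (t := t)) => //.
by exists ((- a - k) * x); rewrite -mulr_natr pow2_x; ring.
Qed.

End PowersOfC.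

(* In Z/p, gcd(k, p) is a multiple of k (Bezout). *)
Lemma gcd_multiple (p k : nat) : (1 < p)%N -> exists x : 'Z_p, (gcdn k p)%:R = k%:R * x.
Proof.
move=> p_gt1; have [a _ dvd_p] := Bezoutr k (ltnW p_gt1).
exists (- a%:R); rewrite mulrN -natrM mulnC; apply/eqP; rewrite -addr_eq0 -natrD.
by apply/eqP/val_inj; rewrite /= val_Zp_nat // (eqP dvd_p).
Qed.

Theorem proposition2p3 (F : closedFieldType) (hchar : [pchar F] =i pred0)
  (n : nat) (hn : (1 < n)%N) (w : F) (hw : n.-primitive_root w)
  (k : nat) (hk : (k < n)%N) (hpow : exists e : nat, gcdn k n = (2 ^ e)%N) :
  exists N : nat, in_ideal_e0 w (epow (cc w (k%:R : 'Z_n)) N).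
Proof.
case: n hn hw hk hpow => [|[|n']] // hn hw _ [e gcd_pow2].
exists (n'.+2 + e)%N; apply: (cpow_in_ideal hw).
by rewrite -gcd_pow2; apply: gcd_multiple.
Qed.
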